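(* Let $G=(\mathcal{Y},E,f)$ be a curl consistent weighted digraph and let $C^{(i)},C^{(j)}\in\mathcal{Y}$ be distinct with neither $(C^{(i)},C^{(j)})$ nor $(C^{(j)},C^{(i)})$ in $E$. Let $\mathcal{B}^{(ij)}$ be the set of paths in $G$ from $C^{(i)}$ to $C^{(j)}$ and $\mathcal{B}^{(ji)}$ the set of paths from $C^{(j)}$ to $C^{(i)}$ (a minimum over the empty set is $+\infty$). If $x\in\mathbb{R}$ is such that the weighted digraph obtained from $G$ by adding the edge $(C^{(i)},C^{(j)})$ with weight $x$ is curl consistent, then $$1-\min_{\overline{B}\in\mathcal{B}^{(ji)}}W(G,\overline{B})<x<\min_{B\in\mathcal{B}^{(ij)}}W(G,B).$$
   Context: A weighted digraph $G=(\mathcal{Y},E,f)$ has $E$ a set of ordered pairs of distinct vertices and $f:E\to\mathbb{R}$, extended to reversed pairs by $f(b,a)=1-f(a,b)$; an edge may be traversed in either direction using this convention. A cycle is a sequence $(c_1,\dots,c_\ell)$ of $\ell\ge3$ pairwise distinct vertices with each consecutive pair and $(c_\ell,c_1)$ an edge in either direction; its curl is $f(c_\ell,c_1)+\sum_{t=1}^{\ell-1}f(c_t,c_{t+1})$. $G$ is curl consistent (a CCWD) if every cycle of length $\ell$ has curl strictly between $1$ and $\ell-1$. A path $B=(b_1,\dots,b_q)$ is a sequence of pairwise distinct vertices with consecutive pairs edges (in either direction); its weight is $W(G,B)=\sum_{t=1}^{q-1}f(b_t,b_{t+1})$. *)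

From mathcomp Require Import all_boot all_order all_algebra.
From mathcomp Require Import reals.
Set Implicit Arguments. Unset Strict Implicit. Unset Printing Implicit Defensive.
Import Order.TTheory GRing.Theory Num.Theory.
Local Open Scope ring_scope.

Section WD.
Variables (R : realType) (Y : finType).

(* A weighted digraph (Y, E, f): E : rel Y is the edge set (ordered pairs of
   distinct vertices); f : Y -> Y -> R gives the weight of the edges in E
   (its values off E are irrelevant).  If both (a,b) and (b,a) are edges,
   the convention f(b,a) = 1 - f(a,b) must be consistent. *)
Definition is_wdigraph (E : rel Y) (f : Y -> Y -> R) : Prop :=
  (forall a, ~~ E a a) /\
  (forall a b, E a b -> E b a -> f b a = 1 - f a b).

Definition fext (E : rel Y) (f : Y -> Y -> R) (a b : Y) : R :=
  if E a b then f a b else 1 - f b a.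

Definition adj (E : rel Y) : rel Y := fun a b => E a b || E b a.

Definition is_cycle (E : rel Y) (c : seq Y) : bool :=
  [&& (3 <= size c)%N, uniq c & cycle (adj E) c].

Definition curl (E : rel Y) (f : Y -> Y -> R) (c : seq Y) : R :=
  \sum_(p <- zip c (rot 1 c)) fext E f p.1 p.2.

Definition curl_consistent (E : rel Y) (f : Y -> Y -> R) : Prop :=
  is_wdigraph E f /\
  forall c : seq Y, is_cycle E c ->
    1 < curl E f c /\ curl E f c < (size c)%:R - 1.

Definition is_path_from_to (E : rel Y) (u v : Y) (B : seq Y) : bool :=
  [&& uniq B, head u B == u, last u B == v & path (adj E) u (behead B)]
  && (B != [::]).

Definition pweight (E : rel Y) (f : Y -> Y -> R) (B : seq Y) : R :=
  \sum_(p <- zip B (behead B)) fext E f p.1 p.2.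

Definition add_edge_rel (E : rel Y) (ci cj : Y) : rel Y :=
  fun a b => E a b || ((a == ci) && (b == cj)).
Definition add_edge_w (f : Y -> Y -> R) (ci cj : Y) (x : R) : Y -> Y -> R :=
  fun a b => if (a == ci) && (b == cj) then x else f a b.

End WD.

(* A path B from u to v in G, with {u, v} = {C_i, C_j} non-adjacent in G, closes up
   through the new edge into a cycle of length at least 3 of the enlarged digraph G'.
   Its curl in G' is W(G, B) plus the weight of the closing step, which is 1 - x from
   C_j back to C_i and x from C_i to C_j. The lower curl bound 1 < curl in G' gives
   x < W(G, B) in the first case and 1 - W(G, B) < x in the second. *)

From mathcomp Require Import all_boot all_order all_algebra.
From mathcomp Require Import reals.
Import Order.TTheory GRing.Theory Num.Theory.
Local Open Scope ring_scope.

Section ClosingEdge.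
Set Implicit Arguments.
Unset Strict Implicit.

Lemma zip_cons_rcons (T : Type) (a b : T) (s : seq T) :
  zip (a :: s) (rcons s b) = rcons (zip (a :: s) s) (last a s, b).
Proof. by elim: s a => [|c s IHs] a //=; rewrite IHs. Qed.

Lemma path_all_zip (T : Type) (e : rel T) (u : T) (s : seq T) :
  path e u s -> all (fun p => e p.1 p.2) (zip (u :: s) s).
Proof. by elim: s u => [|c s IHs] u //= /andP [-> /IHs]. Qed.

Variables (R : realType) (Y : finType).
Implicit Types (E : rel Y) (f : Y -> Y -> R) (u v : Y) (s B : seq Y).

Lemma adjC E : symmetric (adj E).
Proof. by move=> a b; rewrite /adj orbC. Qed.

Lemma is_path_from_toP E u v B :
  is_path_from_to E u v B ->
  exists2 s, B = u :: s & [/\ uniq (u :: s), last u s = v & path (adj E) u s].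
Proof.
case: B => [|b s] /andP [/and4P [uniqB /eqP /= eq_bu /eqP lastB pathB] _] //.
by subst b; exists s.
Qed.

Lemma curl_cons E f u s :
  curl E f (u :: s) = pweight E f (u :: s) + fext E f (last u s) u.
Proof. by rewrite /curl rot1_cons zip_cons_rcons big_rcons. Qed.

Lemma is_cycle_closed_path E E' u v B :
  subrel (adj E) (adj E') -> u != v -> ~~ adj E u v -> adj E' v u ->
  is_path_from_to E u v B -> is_cycle E' B.
Proof.
move=> subEE' neq_uv nadj_uv adj'_vu /is_path_from_toP [s -> [uniqB lastB pathB]].
apply/and3P; split=> //; last first.
  by rewrite /= rcons_path lastB (sub_path subEE' pathB).
case: s lastB pathB {uniqB} => [|c [|d s]] //= lastB.
  by move: neq_uv; rewrite lastB eqxx.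
by rewrite lastB andbT (negbTE nadj_uv).
Qed.

Variables (E : rel Y) (f : Y -> Y -> R) (ci cj : Y) (x : R).
Hypothesis nadj_ij : ~~ adj E ci cj.

Local Notation E' := (add_edge_rel E ci cj).
Local Notation f' := (add_edge_w f ci cj x).

Lemma sub_adj_add_edge : subrel (adj E) (adj E').
Proof. by move=> a b; rewrite /adj /add_edge_rel => /orP [] ->; rewrite ?orbT. Qed.

Lemma fext_add_edge_new : fext E' f' ci cj = x.
Proof. by rewrite /fext /add_edge_rel /add_edge_w !eqxx orbT. Qed.

Lemma fext_add_edge_new_rev : ci != cj -> fext E' f' cj ci = 1 - x.
Proof.
move=> neq_ij; have [_ /negbTE nE_ji] := norP nadj_ij.
by rewrite /fext /add_edge_rel /add_edge_w nE_ji eq_sym (negbTE neq_ij) !eqxx.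
Qed.

Lemma fext_add_edge_old a b : adj E a b -> fext E' f' a b = fext E f a b.
Proof.
move=> adj_ab.
have not_new c d : adj E c d -> (c == ci) && (d == cj) = false.
  move=> adj_cd; apply/negbTE/andP => [[/eqP eq_c /eqP eq_d]].
  by move: adj_cd nadj_ij; rewrite eq_c eq_d => ->.
rewrite /fext /add_edge_rel /add_edge_w not_new // orbF.
by case: (E a b) => //; rewrite not_new // adjC.
Qed.

Lemma pweight_add_edge u s :
  path (adj E) u s -> pweight E' f' (u :: s) = pweight E f (u :: s).
Proof.
move=> path_us; apply: eq_big_seq => p p_in.
exact/fext_add_edge_old/(allP (path_all_zip path_us)).
Qed.

Lemma curl_closed_path u v B :
  is_path_from_to E u v B -> curl E' f' B = pweight E f B + fext E' f' v u.
Proof.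
by move=> /is_path_from_toP [s -> [_ lastB pathB]]; rewrite curl_cons lastB pweight_add_edge.
Qed.

Lemma closed_path_curl_gt1 u v B :
  curl_consistent E' f' -> u != v -> ~~ adj E u v -> adj E' v u ->
  is_path_from_to E u v B -> 1 < pweight E f B + fext E' f' v u.
Proof.
move=> [_ cc'] neq_uv nadj_uv adj'_vu pathB.
have cycB := is_cycle_closed_path sub_adj_add_edge neq_uv nadj_uv adj'_vu pathB.
by rewrite -(curl_closed_path pathB); case: (cc' _ cycB).
Qed.

End ClosingEdge.

Theorem lemma2 (R : realType) (Y : finType) (E : rel Y) (f : Y -> Y -> R)
  (ci cj : Y) (x : R) :
  curl_consistent E f ->
  ci != cj -> ~~ E ci cj -> ~~ E cj ci ->
  curl_consistent (add_edge_rel E ci cj) (add_edge_w f ci cj x) ->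
  (forall Bb : seq Y, is_path_from_to E cj ci Bb -> 1 - pweight E f Bb < x) /\
  (forall B : seq Y, is_path_from_to E ci cj B -> x < pweight E f B).
Proof.
move=> _ neq_ij nE_ij nE_ji cc'.
set E' := add_edge_rel E ci cj.
have neq_ji : cj != ci by rewrite eq_sym.
have nadj_ij : ~~ adj E ci cj by rewrite /adj negb_or nE_ij nE_ji.
have nadj_ji : ~~ adj E cj ci by rewrite adjC.
have adj'_ij : adj E' ci cj by rewrite /adj /E' /add_edge_rel !eqxx orbT.
have adj'_ji : adj E' cj ci by rewrite adjC.
have curl_gt1 := closed_path_curl_gt1 nadj_ij cc'.
split=> [Bb pathBb | B pathB].
- have := curl_gt1 cj ci Bb neq_ji nadj_ji adj'_ij pathBb.
  by rewrite fext_add_edge_new ltrBlDr addrC.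
- have := curl_gt1 ci cj B neq_ij nadj_ij adj'_ji pathB.
  by rewrite fext_add_edge_new_rev // addrCA ltrDl subr_gt0.
Qed.
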